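(* Let $\rho_{AB}$ be any two-qubit state, let $A_1,A_2,A_3$ be dichotomic ($\pm1$-valued) observables on the first qubit and $B_1,B_2,B_3$ dichotomic observables on the second qubit, and set $F_3=\frac{1}{\sqrt3}\big|\sum_{i=1}^3\mathrm{Tr}(\rho_{AB}\,A_i\otimes B_i)\big|$. Then $F_3\le 1/\eta_{opt}$, where $\eta_{opt}$ is the optimal (largest) unsharpness parameter $\eta\in[0,1]$ such that, for any three dichotomic qubit observables, their unsharp versions with parameter $\eta$ are jointly measurable.
   Context: For a dichotomic observable $A=P_+-P_-$ (with $P_\pm$ its spectral projections), its unsharp version with unsharpness parameter $\eta\in[0,1]$ is the two-outcome POVM with elements $A^{(\eta)}_{\pm}=\eta P_\pm+(1-\eta)\frac{I}{2}$, whose associated observable is $\eta A$ (for traceless $A$). A set of POVMs is jointly measurable if there is a single POVM from whose outcomes all of them are obtained as marginals. *)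

From HB Require Import structures.
From mathcomp Require Import all_boot all_order all_algebra.
From mathcomp Require Import boolp classical_sets reals.
From mathcomp Require Import complex mxtens.
Set Implicit Arguments. Unset Strict Implicit. Unset Printing Implicit Defensive.
Import Order.TTheory GRing.Theory Num.Theory.
Local Open Scope ring_scope.
Local Open Scope classical_set_scope.

Section QDefs.
Variable R : realType.
Local Notation C := (R[i]).

Definition rC (x : R) : C := Complex x 0.

Definition adj {m n : nat} (A : 'M[C]_(m, n)) : 'M[C]_(n, m) := (map_mx conjc A)^T.

Definition hermitian {n : nat} (A : 'M[C]_n) : Prop := adj A = A.

Definition psd {n : nat} (A : 'M[C]_n) : Prop :=
  hermitian A /\ forall v : 'cV[C]_n, 0 <= (adj v *m A *m v) 0 0.

Definition density {n : nat} (rho : 'M[C]_n) : Prop := psd rho /\ \tr rho = 1.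

Definition projection {n : nat} (P : 'M[C]_n) : Prop := hermitian P /\ P *m P = P.

Definition dichotomic {n : nat} (A : 'M[C]_n) : Prop :=
  exists Pp Pm : 'M[C]_n,
    [/\ projection Pp, projection Pm, Pp + Pm = 1%:M & A = Pp - Pm].

Definition spec_proj {n : nat} (A : 'M[C]_n) (s : bool) : 'M[C]_n :=
  (rC 2)^-1 *: (1%:M + (if s then A else - A)).

Definition unsharp {n : nat} (A : 'M[C]_n) (eta : R) (s : bool) : 'M[C]_n :=
  rC eta *: spec_proj A s + rC ((1 - eta) / 2) *: 1%:M.

Definition povm {n : nat} {I : finType} (M : I -> 'M[C]_n) : Prop :=
  (forall i, psd (M i)) /\ \sum_(i : I) M i = 1%:M.

Definition jointly_measurable {n k : nat} (M : 'I_k -> bool -> 'M[C]_n) : Prop :=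
  exists G : {ffun 'I_k -> bool} -> 'M[C]_n,
    povm G /\ forall (j : 'I_k) (s : bool), \sum_(l : {ffun 'I_k -> bool} | l j == s) G l = M j s.

Definition JM3_param (eta : R) : Prop :=
  0 <= eta <= 1 /\
  forall A : 'I_3 -> 'M[C]_2, (forall j, dichotomic (A j)) ->
    jointly_measurable (fun j => unsharp (A j) eta).

Definition eta_opt : R := sup [set eta | JM3_param eta].

Definition F3 (rho : 'M[C]_(2 * 2)) (A B : 'I_3 -> 'M[C]_2) : R :=
  (Num.sqrt 3)^-1 * Normc.normc (\sum_(i < 3) \tr (rho *m (A i *t B i))).

End QDefs.

(* Correlations of dichotomic observables are bounded by 1, because the tensor
   product of two dichotomic observables is dichotomic again; hence F_3 <= sqrt 3.
   Conversely, let {G_l}, l in {+1,-1}^3, jointly measure the unsharp Pauli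
   observables eta sigma_x, eta sigma_y, eta sigma_z.  As (l . sigma)^2 = 3, each
   W_l = sqrt 3 - l . sigma is positive (of rank one), so
   0 <= sum_l Tr (G_l W_l) = 2 sqrt 3 - 6 eta, i.e. eta_opt <= 1 / sqrt 3.
   Finally eta = 1/3 is always attainable (G_l = 1/12 sum_k P_k^(l_k)), so
   eta_opt is a positive supremum and F_3 <= sqrt 3 <= 1 / eta_opt. *)

From Pilot Require Import Defs.
From HB Require Import structures.
From mathcomp Require Import all_boot all_order all_algebra.
From mathcomp Require Import boolp classical_sets reals.
From mathcomp Require Import complex mxtens.
From mathcomp Require Import ring lra.
Import Order.TTheory GRing.Theory Num.Theory.
Local Open Scope ring_scope.

Set Implicit Arguments. Unset Strict Implicit. Unset Printing Implicit Defensive.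

Section ComplexMatrices.
Variable R : realType.
Local Notation C := (R[i]).
Local Open Scope complex_scope.

Lemma rCE (x : R) : rC x = x%:C. Proof. by []. Qed.

Lemma sqrt3_sq : Num.sqrt 3 * Num.sqrt 3 = 3 :> R.
Proof. by rewrite -expr2 sqr_sqrtr. Qed.

Lemma sqrt3_gt1 : 1 < Num.sqrt 3 :> R.
Proof. by rewrite -[X in X < _]sqrtr1 ltr_sqrt ?ltr0n ?ltr1n. Qed.

Lemma sum3 (V : nmodType) (F : 'I_3 -> V) : \sum_(k < 3) F k = F 0 + F 1 + F 2.
Proof.
by rewrite !big_ord_recr big_ord0 /= add0r; congr (F _ + F _ + F _); apply: val_inj.
Qed.

Lemma ord3P (j : 'I_3) : [\/ j = 0, j = 1 | j = 2].
Proof.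
by case: j => [[|[|[|//]]] ?]; [constructor 1|constructor 2|constructor 3]; apply: val_inj.
Qed.

Lemma adjD m n (A B : 'M[C]_(m, n)) : adj (A + B) = adj A + adj B.
Proof. by rewrite /adj map_mxD linearD. Qed.

Lemma adjN m n (A : 'M[C]_(m, n)) : adj (- A) = - adj A.
Proof. by rewrite /adj map_mxN linearN. Qed.

Lemma adjZ m n c (A : 'M[C]_(m, n)) : adj (c *: A) = conjc c *: adj A.
Proof. by rewrite /adj map_mxZ linearZ. Qed.

Lemma adj1 n : adj (1%:M : 'M[C]_n) = 1%:M.
Proof. by rewrite /adj map_mx1 trmx1. Qed.

Lemma adjM m n p (A : 'M[C]_(m, n)) (B : 'M[C]_(n, p)) :
  adj (A *m B) = adj B *m adj A.
Proof. by rewrite /adj map_mxM trmx_mul. Qed.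

Lemma adjK m n (A : 'M[C]_(m, n)) : adj (adj A) = A.
Proof. by apply/matrixP => i j; rewrite !mxE conjcK. Qed.

Lemma adj_tens m n p q (A : 'M[C]_(m, n)) (B : 'M[C]_(p, q)) :
  adj (A *t B) = adj A *t adj B.
Proof. by rewrite /adj map_mxT trmx_tens. Qed.

Lemma tensmx11 m n : (1%:M : 'M[C]_m) *t (1%:M : 'M[C]_n) = 1%:M.
Proof.
apply/matrixP => i j.
case: (mxtens_indexP i) => i0 i1; case: (mxtens_indexP j) => j0 j1.
rewrite tensmxE !mxE (inj_eq (can_inj (@mxtens_indexK _ _))) xpair_eqE.
by case: (i0 == j0); case: (i1 == j1); rewrite ?mulr1 ?mulr0.
Qed.

Lemma psd_adj_mul m n (M : 'M[C]_(m, n)) : psd (adj M *m M).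
Proof.
split; first by rewrite /Defs.hermitian adjM adjK.
move=> v; rewrite !mulmxA -adjM -mulmxA mxE.
by apply: sumr_ge0 => i _; rewrite !mxE mulrC mulcJ_ge0.
Qed.

Lemma psd0 n : psd (0 : 'M[C]_n).
Proof.
split=> [|v]; last by rewrite mulmx0 mul0mx mxE.
by apply/matrixP => i j; rewrite !mxE conjc0.
Qed.

Lemma psdD n (A B : 'M[C]_n) : psd A -> psd B -> psd (A + B).
Proof.
move=> [hA qA] [hB qB]; split; first by rewrite /Defs.hermitian adjD hA hB.
by move=> v; rewrite mulmxDr mulmxDl mxE addr_ge0.
Qed.

Lemma psd_sum n (I : finType) (F : I -> 'M[C]_n) :
  (forall i, psd (F i)) -> psd (\sum_i F i).
Proof.
move=> psdF; apply: (big_ind (fun M => psd M)) => [|A B|i _]; [exact: psd0 | exact: psdD | exact: psdF].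
Qed.

Lemma psdZ n (c : R) (A : 'M[C]_n) : 0 <= c -> psd A -> psd (c%:C *: A).
Proof.
move=> c_ge0 [hA qA]; split; first by rewrite /Defs.hermitian adjZ conjc_real hA.
by move=> v; rewrite -scalemxAr -scalemxAl mxE mulr_ge0 ?lecR.
Qed.

Lemma projection_psd n (P : 'M[C]_n) : projection P -> psd P.
Proof. by move=> [hP idP]; rewrite -idP -{1}hP; exact: psd_adj_mul. Qed.

Lemma psd_mxtrace_conj_ge0 m n (rho : 'M[C]_n) (M : 'M[C]_(n, m)) :
  psd rho -> 0 <= \tr (adj M *m rho *m M).
Proof.
move=> [_ q_ge0]; apply: sumr_ge0 => k _.
have -> : (adj M *m rho *m M) k k = (adj (col k M) *m rho *m col k M) 0 0.
  rewrite !mxE; apply: eq_bigr => j _; rewrite !mxE; congr (_ * _).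
  by apply: eq_bigr => i _; rewrite !mxE.
exact: q_ge0.
Qed.

Lemma psd_mxtrace_projection_ge0 n (rho P : 'M[C]_n) :
  psd rho -> projection P -> 0 <= \tr (rho *m P).
Proof.
move=> psd_rho [hP idP].
rewrite -idP mulmxA mxtrace_mulC mulmxA -{1}hP.
exact: psd_mxtrace_conj_ge0.
Qed.

Lemma spec_proj_sum n (A : 'M[C]_n) : spec_proj A true + spec_proj A false = 1%:M.
Proof. by apply/matrixP => i j; rewrite /spec_proj !mxE rCE; field. Qed.

Lemma spec_proj_diff n (A : 'M[C]_n) : spec_proj A true - spec_proj A false = A.
Proof. by apply/matrixP => i j; rewrite /spec_proj !mxE rCE; field. Qed.

Lemma spec_proj_projection n (A : 'M[C]_n) s :
  Defs.hermitian A -> A *m A = 1%:M -> projection (spec_proj A s).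
Proof.
move=> hA invA; split.
  rewrite /Defs.hermitian /spec_proj adjZ rCE conjc_inv conjc_real adjD adj1.
  by case: s; rewrite ?adjN hA.
rewrite /spec_proj -scalemxAl -scalemxAr scalerA mulmxDl !mulmxDr !mul1mx mulmx1.
apply/matrixP => i j.
by case: s; rewrite ?mulmxN ?mulNmx ?opprK invA !mxE rCE; field.
Qed.

Lemma dichotomicP n (A : 'M[C]_n) :
  dichotomic A <-> Defs.hermitian A /\ A *m A = 1%:M.
Proof.
split=> [[P [Q [[hP idP] [hQ _] PQ1 ->]]]|[hA invA]].
  split; first by rewrite /Defs.hermitian adjD adjN hP hQ.
  have -> : Q = 1%:M - P by rewrite -PQ1 addrAC subrr add0r.
  rewrite !(mulmxBl, mulmxBr, mul1mx, mulmx1) idP.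
  by apply/matrixP => i j; rewrite !mxE; ring.
exists (spec_proj A true), (spec_proj A false).
by split; rewrite ?spec_proj_sum ?spec_proj_diff //; apply: spec_proj_projection.
Qed.

Lemma dichotomic_tens m n (A : 'M[C]_m) (B : 'M[C]_n) :
  dichotomic A -> dichotomic B -> dichotomic (A *t B).
Proof.
move=> /dichotomicP[hA invA] /dichotomicP[hB invB]; apply/dichotomicP.
by rewrite /Defs.hermitian adj_tens hA hB tensmx_mul invA invB tensmx11.
Qed.

Lemma density_dichotomic_bound n (rho D : 'M[C]_n) :
  density rho -> dichotomic D -> `|\tr (rho *m D)| <= 1.
Proof.
move=> [psd_rho tr_rho] [P [Q [projP projQ PQ1 ->]]].
have trP := psd_mxtrace_projection_ge0 psd_rho projP.
have trQ := psd_mxtrace_projection_ge0 psd_rho projQ.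
have trPQ : \tr (rho *m P) + \tr (rho *m Q) = 1.
  by rewrite -raddfD -mulmxDr PQ1 mulmx1.
rewrite mulmxBr raddfB -trPQ.
by apply: (le_trans (ler_normB _ _)); rewrite !ger0_norm.
Qed.

Lemma unsharp_diff n (A : 'M[C]_n) eta :
  unsharp A eta true - unsharp A eta false = rC eta *: A.
Proof.
by rewrite /unsharp opprD addrACA (subrr (_ *: 1%:M)) addr0 -scalerBr spec_proj_diff.
Qed.

Lemma unsharp_sum n (A : 'M[C]_n) eta : unsharp A eta true + unsharp A eta false = 1%:M.
Proof.
rewrite /unsharp addrACA -scalerDr spec_proj_sum -!scalerDl !rCE -!rmorphD.
by rewrite (_ : eta + _ = 1) ?scale1r //; field.
Qed.

Definition sgn (b : bool) : R := if b then 1 else -1.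

Lemma joint_marginal_diff n k (M : 'I_k -> bool -> 'M[C]_n)
    (G : {ffun 'I_k -> bool} -> 'M[C]_n) j :
  (forall i s, \sum_(l : {ffun 'I_k -> bool} | l i == s) G l = M i s) ->
  \sum_(l : {ffun 'I_k -> bool}) (sgn (l j))%:C *: G l = M j true - M j false.
Proof.
move=> marg; rewrite -!marg (bigID (fun l : {ffun 'I_k -> bool} => l j)) /= -sumrN.
congr (_ + _); apply: eq_big => l.
- by rewrite eqb_id.
- by move=> ->; rewrite scale1r.
- by rewrite eqbF_neg.
- by move=> /negbTE ->; rewrite /sgn rmorphN rmorph1 scaleN1r.
Qed.

Definition mx2 (a b c d : C) : 'M[C]_2 :=
  \matrix_(i, j) if (i : nat) == 0 then (if (j : nat) == 0 then a else b)
                 else (if (j : nat) == 0 then c else d).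

Definition pauli (k : 'I_3) : 'M[C]_2 :=
  match nat_of_ord k with
  | 0 => mx2 0 1 1 0
  | 1 => mx2 0 (- 'i%C) 'i%C 0
  | _ => mx2 1 0 0 (-1)
  end.

Lemma pauli_dichotomic k : dichotomic (pauli k).
Proof.
apply/dichotomicP; split; apply/matrixP => i j; rewrite !mxE.
  case: i => [[|[|//]] ?]; case: j => [[|[|//]] ?];
  case: k => [[|[|[|//]]] ?]; rewrite /pauli /= !mxE /=;
  by apply/eqP; rewrite eq_complex /= ?opprK ?oppr0 ?eqxx.
have ii : 'i%C * 'i%C = -1 :> C by rewrite -expr2 sqr_i.
rewrite !big_ord_recr big_ord0 /=.
case: i => [[|[|//]] ?]; case: j => [[|[|//]] ?];
by case: k => [[|[|[|//]]] ?]; rewrite /pauli /= !mxE /=; ring: ii.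
Qed.

Definition bloch_witness (s : 'I_3 -> bool) : 'M[C]_2 :=
  (Num.sqrt 3)%:C *: 1%:M - \sum_k (sgn (s k))%:C *: pauli k.

Lemma conjc_cart (a b : R) : conjc (a%:C + 'i%C * b%:C) = a%:C - 'i%C * b%:C.
Proof. by apply/eqP; rewrite eq_complex /= !mul0r !mul1r !subr0 !add0r !addr0 !eqxx. Qed.

Lemma bloch_witness_rank1 s :
  exists2 c : R, 0 < c & exists v : 'cV[C]_2, c%:C *: bloch_witness s = v *m adj v.
Proof.
(* [v = (x, c)] spans the range of the witness: [c (sqrt 3 - s_z) = 2 = |x|^2]. *)
pose c := sgn (s 2) + Num.sqrt 3.
pose x : C := - (sgn (s 0))%:C + 'i%C * (sgn (s 1))%:C.
exists c; first by rewrite /c /sgn; case: (s 2); have := sqrt3_gt1; lra.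
exists (\col_(i < 2) if (i : nat) == 0 then x else c%:C).
have ii : 'i%C * 'i%C = -1 :> C by rewrite -expr2 sqr_i.
have rr : (Num.sqrt 3)%:C * (Num.sqrt 3)%:C = 3 :> C by rewrite -rmorphM sqrt3_sq rmorph_nat.
have sgn_sq k : (sgn (s k))%:C * (sgn (s k))%:C = 1 :> C.
  by rewrite -rmorphM /sgn; case: (s k); rewrite ?mulrNN mulr1.
have s0 := sgn_sq 0; have s1 := sgn_sq 1; have s2 := sgn_sq 2.
have cE : c%:C = (sgn (s 2))%:C + (Num.sqrt 3)%:C :> C by rewrite /c raddfD.
apply/matrixP => i j; rewrite /bloch_witness !mxE big_ord1 !mxE sum3 (fun_if conjc).
rewrite /x -rmorphN conjc_cart conjc_real !mxE rmorphN cE.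
case: i => [[|[|//]] ?]; case: j => [[|[|//]] ?];
  by rewrite /pauli /= ?mxE /=; ring: ii rr s0 s1 s2.
Qed.

Lemma psd_mxtrace_bloch_witness_ge0 (G : 'M[C]_2) s :
  psd G -> 0 <= \tr (G *m bloch_witness s).
Proof.
move=> psdG; have [c c_gt0 [v cW]] := bloch_witness_rank1 s.
have := psd_mxtrace_conj_ge0 v psdG.
rewrite mxtrace_mulC mulmxA -cW -scalemxAl linearZ /= mxtrace_mulC.
by rewrite pmulr_rge0 // ltcR.
Qed.

Lemma sum_mul_bloch_witness (G : {ffun 'I_3 -> bool} -> 'M[C]_2) eta :
  povm G ->
  (forall j s, \sum_(l : {ffun 'I_3 -> bool} | l j == s) G l = unsharp (pauli j) eta s) ->
  \sum_(l : {ffun 'I_3 -> bool}) G l *m bloch_witness l = (Num.sqrt 3 - 3 * eta)%:C *: 1%:M.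
Proof.
move=> [_ sumG] marg.
have pauli_sq k : pauli k *m pauli k = 1%:M by have /dichotomicP[] := pauli_dichotomic k.
have expand l : G l *m bloch_witness l =
    (Num.sqrt 3)%:C *: G l - \sum_k (sgn (l k))%:C *: (G l *m pauli k).
  rewrite /bloch_witness mulmxBr -scalemxAr mulmx1 mulmx_sumr.
  by congr (_ - _); apply: eq_bigr => k _; rewrite -scalemxAr.
rewrite (eq_bigr _ (fun l _ => expand l)) sumrB -scaler_sumr sumG exchange_big /=.
have marg_pauli k :
    \sum_(l : {ffun 'I_3 -> bool}) (sgn (l k))%:C *: (G l *m pauli k) = rC eta *: 1%:M.
  rewrite (eq_bigr (fun l : {ffun 'I_3 -> bool} => ((sgn (l k))%:C *: G l) *m pauli k));
    last by move=> l _; rewrite scalemxAl.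
  by rewrite -mulmx_suml (joint_marginal_diff _ marg) unsharp_diff -scalemxAl pauli_sq.
rewrite (eq_bigr _ (fun k _ => marg_pauli k)) sum3 -!scalerDl -scalerBl rCE.
by congr (_ *: _); rewrite -!rmorphD -rmorphB; congr (_%:C); ring.
Qed.

Lemma JM3_param_le_inv_sqrt3 (eta : R) : JM3_param eta -> eta <= (Num.sqrt 3)^-1.
Proof.
move=> [_ jm]; have [G [povmG marg]] := jm _ pauli_dichotomic.
have : 0 <= \tr (\sum_l G l *m bloch_witness l).
  rewrite raddf_sum; apply: sumr_ge0 => l _.
  exact: psd_mxtrace_bloch_witness_ge0 (povmG.1 l).
rewrite (sum_mul_bloch_witness povmG marg) mxtraceZ mxtrace1 mulr_natr.
rewrite -(rmorphMn (real_complex R)) lecR => trace_ge0.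
have r_gt1 := sqrt3_gt1; have rr := sqrt3_sq.
have r_gt0 : 0 < Num.sqrt 3 :> R by lra.
rewrite -(ler_pM2r r_gt0) mulVf ?gt_eqF //; nra.
Qed.

Definition ffun3 (a b c : bool) : {ffun 'I_3 -> bool} :=
  [ffun i : 'I_3 => if (i : nat) == 0 then a else if (i : nat) == 1 then b else c].

Lemma big_ffun3 (V : nmodType) (F : {ffun 'I_3 -> bool} -> V) :
  \sum_l F l = \sum_(a : bool) \sum_(b : bool) \sum_(c : bool) F (ffun3 a b c).
Proof.
rewrite (reindex (fun t : bool * bool * bool => ffun3 t.1.1 t.1.2 t.2)) /=.
  by rewrite !pair_big.
exists (fun l => (l 0, l 1, l 2)) => [[[a b] c] _|l _]; first by rewrite !ffunE.
apply/ffunP => i; rewrite ffunE.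
by case: i => [[|[|[|//]]] ?] /=; congr (l _); apply: val_inj.
Qed.

Lemma big_ffun3_marginal (f : bool -> C) (j k : 'I_3) s :
  \sum_(l : {ffun 'I_3 -> bool} | l j == s) f (l k) =
  if k == j then 4 * f s else 2 * (f true + f false).
Proof.
rewrite big_mkcond big_ffun3 !big_bool /=.
by case: (ord3P j) => ->; case: (ord3P k) => ->; case: s; rewrite !ffunE /=; ring.
Qed.

Lemma unsharp_third_jointly_measurable n (A : 'I_3 -> 'M[C]_n) :
  (forall j, dichotomic (A j)) -> jointly_measurable (fun j => unsharp (A j) (1 / 3)).
Proof.
move=> dichA.
pose G (l : {ffun 'I_3 -> bool}) := (12^-1 : R)%:C *: \sum_k spec_proj (A k) (l k).
have marg j s : \sum_(l : {ffun 'I_3 -> bool} | l j == s) G l = unsharp (A j) (1 / 3) s.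
  apply/matrixP => p q; rewrite summxE.
  under eq_bigr => l _ do rewrite mxE summxE.
  rewrite -mulr_sumr exchange_big /=.
  under eq_bigr => k _ do rewrite (big_ffun3_marginal (fun b => spec_proj (A k) b p q)).
  have PQ k : spec_proj (A k) true p q + spec_proj (A k) false p q = (p == q)%:R.
    by have /matrixP/(_ p q) := spec_proj_sum (A k); rewrite !mxE.
  rewrite sum3 !PQ /unsharp.
  by case: (ord3P j) => ->; rewrite /= !mxE !rCE; field.
exists G; split=> //; split.
- move=> l; apply: psdZ; first by rewrite invr_ge0.
  apply: psd_sum => k; apply: projection_psd.
  by have /dichotomicP[hA invA] := dichA k; exact: spec_proj_projection.
rewrite (bigID (fun l : {ffun 'I_3 -> bool} => l 0)) /= -(unsharp_sum (A 0) (1 / 3)) -!marg.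
by congr (_ + _); apply: eq_bigl => l; rewrite ?eqb_id ?eqbF_neg.
Qed.

Lemma JM3_param_third : JM3_param (1 / 3 : R).
Proof.
split; first by apply/andP; split; lra.
by move=> A dichA; exact: unsharp_third_jointly_measurable.
Qed.

Lemma normC_normr (z : C) : (Normc.normc z)%:C = `|z|.
Proof. by case: z => a b; rewrite normc_def. Qed.

Lemma F3_le_sqrt3 (rho : 'M[C]_(2 * 2)) (A B : 'I_3 -> 'M[C]_2) :
  density rho -> (forall j, dichotomic (A j)) -> (forall j, dichotomic (B j)) ->
  F3 rho A B <= Num.sqrt 3.
Proof.
move=> rho_density dichA dichB.
have norm_le3 : Normc.normc (\sum_(i < 3) \tr (rho *m (A i *t B i))) <= 3.
  rewrite -lecR normC_normr; apply: (le_trans (ler_norm_sum _ _ _)).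
  apply: le_trans (ler_sum _ (fun i _ => density_dichotomic_bound rho_density
                               (dichotomic_tens (dichA i) (dichB i)))) _.
  by rewrite sumr_const card_ord rmorph_nat.
have r_gt1 := sqrt3_gt1; have rr := sqrt3_sq.
have r_gt0 : 0 < Num.sqrt 3 :> R by lra.
have inv_r_ge0 : 0 <= (Num.sqrt 3)^-1 :> R by rewrite invr_ge0 ltW.
apply: le_trans (ler_wpM2l inv_r_ge0 norm_le3) _.
by rewrite -[X in _ * X <= _]rr mulKf ?gt_eqF.
Qed.

Lemma has_sup_JM3_param : has_sup [set eta : R | JM3_param eta].
Proof.
split; first by exists (1 / 3); exact: JM3_param_third.
by exists 1 => eta [/andP[_ eta_le1] _].
Qed.

Lemma eta_opt_ge_third : 1 / 3 <= eta_opt R.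
Proof. exact: sup_upper_bound has_sup_JM3_param _ JM3_param_third. Qed.

Lemma eta_opt_le_inv_sqrt3 : eta_opt R <= (Num.sqrt 3)^-1.
Proof.
apply: ge_sup; first exact: has_sup_JM3_param.1.
by move=> eta; exact: JM3_param_le_inv_sqrt3.
Qed.

End ComplexMatrices.

Theorem theorem3 (R : realType) (rho : 'M[R[i]]_(2 * 2)) (A B : 'I_3 -> 'M[R[i]]_2) :
  density rho ->
  (forall j, dichotomic (A j)) ->
  (forall j, dichotomic (B j)) ->
  F3 rho A B <= (eta_opt R)^-1.
Proof.
move=> rho_density dichA dichB.
apply: le_trans (F3_le_sqrt3 rho_density dichA dichB) _.
have eta_gt0 : 0 < eta_opt R by apply: lt_le_trans (eta_opt_ge_third R); lra.
by rewrite -[X in X <= _]invrK lef_pV2 ?posrE ?invr_gt0 ?sqrtr_gt0 // eta_opt_le_inv_sqrt3.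
Qed.
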